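(* Let $J$ be a januarial of general type $((h_1,g_1),(h_2,g_2))$, embedded in a closed orientable surface of genus $g$, and let $\alpha=v-e$, where $v$ is the number of vertices and $e$ the number of edges of the common graph $\Upsilon$ of $J$. Then $$g=g_1+g_2+\frac{h_1+h_2+\alpha}{2}-1.$$
   Context: Let $\Delta(2,k,\ell)=\langle x,y : x^2=y^k=(xy)^\ell=1\rangle$ with $k,\ell\in\mathbb{Z}_{\ge 2}\cup\{\infty\}$, acting on a finite set $S$. The coset graph $\Gamma$ of this action is defined as follows. Its vertices are the elements of $S$. Two vertices transposed by $x$ are joined by an undirected $x$-edge, and points fixed by $x$ carry no $x$-edge. There is a directed $y$-edge from $u$ to $u y$. $\Gamma$ is $2$-cell embedded in a closed orientable surface using the rotation system that cyclically orders, at each vertex, its incoming $y$-edge, its outgoing $y$-edge and its $x$-edge. The faces of this embedding have boundary labels $y^n$ with $n\mid k$ (called $y$-faces) or $(xy)^m$ with $m\mid\ell$ (called $xy$-faces). The embedded graph is the coset diagram. A januarial $J$ is the coset diagram of such an action in which $\langle xy\rangle$ has exactly two orbits, each of size $|S|/2$; so $J$ has exactly two $xy$-faces. The genus of $J$ is the genus of this surface. Let $S_1,S_2$ be the closures of the two $xy$-faces (discs). Collapsing every $y$-face to a point gives the companion graph $\Gamma'$ and the companion diagram $J'$; let $S_i'$ be the images of $S_i$. Let $R_i$ be a small closed neighbourhood of $S_i'$ in $J'$. Then $R_i$ is a compact surface with boundary; let $g_i$ be its genus and $h_i$ the number of boundary components of $R_i$. The common graph is $\Upsilon=S_1'\cap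 S_2'$. $J$ is of simple type if $\Upsilon$ is a union of $h$ pairwise disjoint simple circuits; in that case $h_1=h_2=h$ and the type is written $(h,g_1,g_2)$. Otherwise $J$ is of general type, written $((h_1,g_1),(h_2,g_2))$. *)

From mathcomp Require Import all_boot all_order all_algebra all_fingroup.
Set Implicit Arguments. Unset Strict Implicit. Unset Printing Implicit Defensive.
Import GRing.Theory Num.Theory.

(* Conventions: S is a finite type T; the generators x, y of Delta(2,k,l) act
   by permutations x y : {perm T}.  The paper writes the action on the right
   (u |-> u x); in mathcomp (x * y) u = y (x u), i.e. the perm (x * y) is the
   paper's "xy". *)

(* k, l : option nat, with None standing for infinity. *)
Definition order_divides (T : finType) (o : option nat) (s : {perm T}) : bool :=
  if o is Some n then (2 <= n)%N && ((s ^+ n)%g == 1%g) else true.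

Definition Delta_action (T : finType) (k l : option nat) (x y : {perm T}) : Prop :=
  [/\ (x ^+ 2)%g = 1%g, order_divides k y & order_divides l (x * y)%g].

Definition gen_rel (T : finType) (x y : {perm T}) : rel T :=
  fun u v => (v == x u) || (v == y u).
Definition transitive_action (T : finType) (x y : {perm T}) : Prop :=
  forall u v : T, connect (gen_rel x y) u v.

Definition januarial (T : finType) (x y : {perm T}) : Prop :=
  [/\ transitive_action x y, #|porbits (x * y)%g| = 2%N &
      forall O, O \in porbits (x * y)%g -> (2 * #|O|)%N = #|T| ].

Definition xedges (T : finType) (x : {perm T}) : {set {set T}} :=
  [set e in porbits x | #|e| == 2%N].

Definition meets (T : finType) (A B : {set T}) : bool := A :&: B != set0.

(* Euler characteristic of the coset diagram J: vertices |S|, edges = x-edges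
   plus one directed y-edge u -> u y per u, faces = y-faces + xy-faces. *)
Definition chi_J (T : finType) (x y : {perm T}) : int :=
  (#|T|%:Z - (#|xedges x| + #|T|)%:Z + (#|porbits y| + #|porbits (x * y)%g|)%:Z)%R.

Definition is_genus (chi : int) (g : nat) : Prop := chi = (2 - 2 * g%:Z)%R.

(* ---- companion diagram J' ----
   vertices of Gamma' = y-orbits (collapsed y-faces), edges = x-edges;
   the rotation at a collapsed vertex is the cyclic y-order of its darts.
   For an xy-orbit O (an xy-face), S_O' = closure of the image of the face:   *)

Definition Vface (T : finType) (y : {perm T}) (O : {set T}) : {set {set T}} :=
  [set C in porbits y | meets C O].
Definition Eface (T : finType) (x : {perm T}) (O : {set T}) : {set {set T}} :=
  [set e in xedges x | meets e O].

(* next element of D after w in the cyclic y-order *)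
Definition next_in (T : finType) (y : {perm T}) (D : {set T}) (w : T) : T :=
  (y ^+ (head 0%N [seq k <- (iota 1 #|T|) | (y ^+ k)%g w \in D]))%g w.

Definition orbit_count (T : finType) (f : T -> T) (D : {set T}) : nat :=
  #|[set [set v | fconnect f w v] | w in D]|.

(* Number of faces of the subgraph H_O = S_O' (as a graph) with the rotation
   system induced from J': faces of the induced map on the darts of H_O
   (face permutation = x followed by the induced rotation), plus isolated
   vertices.  The small closed neighbourhood R_O of S_O' in J' is the ribbon
   surface of H_O with the disc of the face O glued in, so R_O has
   (faces of H_O) - 1 boundary components, and capping them yields the
   closed surface of the map H_O. *)
Definition face_count_H (T : finType) (x y : {perm T}) (O : {set T}) : nat :=
  let D := cover (Eface x O) in
  (orbit_count (fun w => next_in y D (x w)) D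
   + #|[set C in Vface y O | C :&: D == set0]|)%N.

Definition hbound (T : finType) (x y : {perm T}) (O : {set T}) : nat :=
  (face_count_H x y O).-1.

Definition chi_capped_R (T : finType) (x y : {perm T}) (O : {set T}) : int :=
  (#|Vface y O|%:Z - #|Eface x O|%:Z + (face_count_H x y O)%:Z)%R.

Definition Vcommon (T : finType) (y : {perm T}) (O1 O2 : {set T}) : {set {set T}} :=
  [set C in porbits y | meets C O1 && meets C O2].
Definition Ecommon (T : finType) (x : {perm T}) (O1 O2 : {set T}) : {set {set T}} :=
  [set e in xedges x | meets e O1 && meets e O2].

Definition alpha (T : finType) (x y : {perm T}) (O1 O2 : {set T}) : int :=
  (#|Vcommon y O1 O2|%:Z - #|Ecommon x O1 O2|%:Z)%R.

(* simple type: Upsilon is a disjoint union of simple circuits, i.e. every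
   vertex of Upsilon has degree 2 in Upsilon (loops counted twice); the degree
   of a vertex C is the number of darts at C on edges of Upsilon. *)
Definition simple_type (T : finType) (x y : {perm T}) (O1 O2 : {set T}) : Prop :=
  forall C, C \in Vcommon y O1 O2 -> #|C :&: cover (Ecommon x O1 O2)| = 2%N.

Definition general_type (T : finType) (x y : {perm T}) (O1 O2 : {set T}) : Prop :=
  ~ simple_type x y O1 O2.

(* Both capped surfaces R_1', R_2' are built from the companion graph: every
   y-orbit and every x-edge of J meets one of the two xy-faces, so by
   inclusion-exclusion the vertices and edges counted twice in
   chi(R_1') + chi(R_2') are exactly those of the common graph.  Hence
   chi(R_1') + chi(R_2') = chi(J) - 2 + alpha + (h_1 + 1) + (h_2 + 1), and
   substituting chi = 2 - 2 genus gives the formula. *)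

From mathcomp Require Import all_boot all_order all_algebra all_fingroup.
From mathcomp Require Import zify lra.
Set Implicit Arguments.
Unset Strict Implicit.
Unset Printing Implicit Defensive.

Import GRing.Theory Num.Theory.
Local Open Scope ring_scope.

Section Orbits.

Variables (T : finType) (s : {perm T}).

Lemma porbits_neq0 C : C \in porbits s -> C != set0.
Proof. by case/imsetP=> t _ ->; apply/set0Pn; exists t; apply: porbit_id. Qed.

Lemma porbits_eq_pair O1 O2 :
  #|porbits s| = 2%N -> O1 \in porbits s -> O2 \in porbits s -> O1 != O2 ->
  porbits s = [set O1; O2].
Proof.
move=> card2 O1s O2s neqO; apply/esym/eqP.
rewrite eqEcard cards2 neqO card2 andbT.
by apply/subsetP=> C; rewrite !inE => /orP[]/eqP->.
Qed.

Lemma porbits_pair_cover O1 O2 :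
  porbits s = [set O1; O2] -> forall t, (t \in O1) || (t \in O2).
Proof.
move=> sE t; have : porbit s t \in porbits s by apply: imset_f.
by rewrite sE !inE => /orP[]/eqP <-; rewrite porbit_id ?orbT.
Qed.

End Orbits.

Section Cover.

Variables (T : finType) (O1 O2 : {set T}).
Hypothesis cover : forall t, (t \in O1) || (t \in O2).

Lemma meets_cover C : meets C O1 || meets C O2 = (C != set0).
Proof.
rewrite /meets -negb_and -setU_eq0 -setIUr; congr (~~ (_ == _)).
by apply/setIidPl/subsetP=> t _; rewrite inE cover.
Qed.

Lemma card_meets_add (F : {set {set T}}) :
  set0 \notin F ->
  (#|[set C in F | meets C O1]| + #|[set C in F | meets C O2]|
   = #|F| + #|[set C in F | meets C O1 && meets C O2]|)%N.
Proof.
move=> F0; rewrite -cardsUI; congr (_ + _)%N; apply: eq_card => C; rewrite !inE.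
- rewrite -andb_orr meets_cover andb_idr //.
  by apply: contraTneq => ->.
- by rewrite andbACA andbb.
Qed.

End Cover.

Lemma card_Vface_add (T : finType) (y : {perm T}) (O1 O2 : {set T}) :
  (forall t, (t \in O1) || (t \in O2)) ->
  (#|Vface y O1| + #|Vface y O2| = #|porbits y| + #|Vcommon y O1 O2|)%N.
Proof.
move=> cover; rewrite card_meets_add //.
by apply: contraT => /negbNE /porbits_neq0; rewrite eqxx.
Qed.

Lemma card_Eface_add (T : finType) (x : {perm T}) (O1 O2 : {set T}) :
  (forall t, (t \in O1) || (t \in O2)) ->
  (#|Eface x O1| + #|Eface x O2| = #|xedges x| + #|Ecommon x O1 O2|)%N.
Proof.
move=> cover; rewrite card_meets_add //.
by rewrite inE cards0 andbF.
Qed.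

Lemma face_count_H_gt0 (T : finType) (x y : {perm T}) (O : {set T}) :
  O != set0 -> (0 < face_count_H x y O)%N.
Proof.
case/set0Pn=> t tO; rewrite /face_count_H /orbit_count addn_gt0 !card_gt0.
set D := cover (Eface x O).
have [/set0Pn[w wD] | /negPn/eqP D0] := boolP (D != set0).
  by apply/orP; left; apply/set0Pn; eexists; apply: imset_f wD.
apply/orP; right; apply/set0Pn; exists (porbit y t).
rewrite !inE D0 setI0 eqxx andbT /meets imset_f //=.
by apply/set0Pn; exists t; rewrite inE porbit_id.
Qed.

Lemma chi_capped_R_add (T : finType) (x y : {perm T}) (O1 O2 : {set T}) :
  (forall t, (t \in O1) || (t \in O2)) ->
  chi_capped_R x y O1 + chi_capped_R x y O2 + #|porbits (x * y)%g|%:Z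
  = chi_J x y + alpha x y O1 O2
    + (face_count_H x y O1 + face_count_H x y O2)%:Z.
Proof.
move=> cover; rewrite /chi_capped_R /chi_J /alpha.
have := card_Vface_add y cover; have := card_Eface_add x cover.
lia.
Qed.

Theorem lemma5 (T : finType) (k l : option nat) (x y : {perm T})
    (O1 O2 : {set T}) (g g1 g2 h1 h2 : nat) :
  Delta_action k l x y ->
  januarial x y ->
  O1 \in porbits (x * y)%g -> O2 \in porbits (x * y)%g -> O1 != O2 ->
  general_type x y O1 O2 ->
  h1 = hbound x y O1 -> h2 = hbound x y O2 ->
  is_genus (chi_capped_R x y O1) g1 -> is_genus (chi_capped_R x y O2) g2 ->
  is_genus (chi_J x y) g ->
  (g%:R : rat) = g1%:R + g2%:R + ((h1 + h2)%:R + (alpha x y O1 O2)%:~R) / 2 - 1.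
Proof.
move=> _ [_ card2 _] O1xy O2xy neqO _ -> -> chi1 chi2 chiJ.
have cover := porbits_pair_cover (porbits_eq_pair card2 O1xy O2xy neqO).
have face1 := face_count_H_gt0 x y (porbits_neq0 O1xy).
have face2 := face_count_H_gt0 x y (porbits_neq0 O2xy).
have := chi_capped_R_add x y cover.
rewrite chi1 chi2 chiJ card2 /hbound -(prednK face1) -(prednK face2).
move/(congr1 (fun z : int => z%:~R : rat)).
rewrite !(intrD, intrN, intrM) -!pmulrn.
lra.
Qed.
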